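(* Let $k>0$. On $\mathbb{C}\times\mathcal{D}_1$ consider the system $$2k\ddot z-\bar\eta\dot z^2+2\Big(2k\frac{\bar w}{P}-\bar\eta^2\Big)\dot z\dot w-\bar\eta^3\dot w^2=0,\qquad 2k\ddot w+\dot z^2+2\bar\eta\dot z\dot w+\Big(4k\frac{\bar w}{P}+\bar\eta^2\Big)\dot w^2=0,$$ where $P=1-|w|^2$ and $\eta=\frac{z+\bar zw}{1-|w|^2}$. For any $\eta_0\in\mathbb{C}$ and $B\in\mathbb{C}\setminus\{0\}$, the curve $w(t)=B\,\frac{\tanh(t|B|)}{|B|}$, $z(t)=\eta_0-w(t)\bar\eta_0$ is a solution of this system (along it $\eta(t)\equiv\eta_0$ is constant).
   Context: $\mathcal{D}_1=\{w\in\mathbb{C}:|w|<1\}$. The displayed system is the geodesic equation of the Kähler metric on the Siegel–Jacobi disk with Kähler form $\omega_1=\mathrm{i}\big[\frac{2k}{(1-|w|^2)^2}dw\wedge d\bar w+\frac{A\wedge\bar A}{1-|w|^2}\big]$, $A=dz+\bar\eta dw$. *)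

From Stdlib Require Import Reals.
Open Scope R_scope.

Record Cplx := mkC { Re : R ; Im : R }.

Definition Cadd (a b : Cplx) : Cplx := mkC (Re a + Re b) (Im a + Im b).
Definition Copp (a : Cplx) : Cplx := mkC (- Re a) (- Im a).
Definition Csub (a b : Cplx) : Cplx := Cadd a (Copp b).
Definition Cmul (a b : Cplx) : Cplx :=
  mkC (Re a * Re b - Im a * Im b) (Re a * Im b + Im a * Re b).
Definition Cconj (a : Cplx) : Cplx := mkC (Re a) (- Im a).
Definition Cnorm2 (a : Cplx) : R := Re a * Re a + Im a * Im a.
Definition Cabs (a : Cplx) : R := sqrt (Cnorm2 a).
Definition Cinv (a : Cplx) : Cplx := mkC (Re a / Cnorm2 a) (- Im a / Cnorm2 a).
Definition Cdiv (a b : Cplx) : Cplx := Cmul a (Cinv b).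
Definition RtoC (r : R) : Cplx := mkC r 0.
Definition C0 : Cplx := RtoC 0.

Definition tanh (x : R) : R := sinh x / cosh x.

Definition has_deriv (f f' : R -> Cplx) : Prop :=
  forall t : R,
    derivable_pt_lim (fun s => Re (f s)) t (Re (f' t)) /\
    derivable_pt_lim (fun s => Im (f s)) t (Im (f' t)).

Definition Pfun (w : Cplx) : Cplx := RtoC (1 - Cnorm2 w).

Definition eta (z w : Cplx) : Cplx := Cdiv (Cadd z (Cmul (Cconj z) w)) (Pfun w).

Definition geod_eq1 (k : R) (z w z1 w1 z2 : Cplx) : Cplx :=
  let eb := Cconj (eta z w) in
  Cadd (Cadd (Csub (Cmul (RtoC (2 * k)) z2) (Cmul eb (Cmul z1 z1)))
             (Cmul (RtoC 2)
                   (Cmul (Csub (Cmul (RtoC (2 * k)) (Cdiv (Cconj w) (Pfun w)))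
                               (Cmul eb eb))
                         (Cmul z1 w1))))
       (Copp (Cmul (Cmul eb (Cmul eb eb)) (Cmul w1 w1))).

Definition geod_eq2 (k : R) (z w z1 w1 w2 : Cplx) : Cplx :=
  let eb := Cconj (eta z w) in
  Cadd (Cadd (Cadd (Cmul (RtoC (2 * k)) w2) (Cmul z1 z1))
             (Cmul (RtoC 2) (Cmul eb (Cmul z1 w1))))
       (Cmul (Cadd (Cmul (RtoC (4 * k)) (Cdiv (Cconj w) (Pfun w))) (Cmul eb eb))
             (Cmul w1 w1)).

Definition w_curve (B : Cplx) (t : R) : Cplx :=
  Cmul B (RtoC (tanh (t * Cabs B) / Cabs B)).
Definition z_curve (eta0 B : Cplx) (t : R) : Cplx :=
  Csub eta0 (Cmul (w_curve B t) (Cconj eta0)).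

From Stdlib Require Import Reals Lra Psatz.
(* Imported after Reals so that [tanh] denotes the one of Defs. *)
From Pilot Require Import Defs.
Open Scope R_scope.

(* - Hyperbolic calculus: tanh^2 < 1 and tanh' = 1 - tanh^2, so the real
     profile c(t) = tanh(tb)/b solves the Riccati equation c' = p with
     p = 1 - b^2 c^2, and p' = -2 b^2 c p.  Hence |w| < 1 and w stays a
     radial curve w = B c with w' = B p, w'' = B (-2|B|^2 c p).
   - Algebra: for every w in the disk, z = eta0 - w conj(eta0) has
     eta(z, w) = eta0; and along such curves (z' = -w' conj(eta0),
     z'' = -w'' conj(eta0)) both geodesic equations are multiples of the
     Poincare-disk geodesic expression  w'' + 2 conj(w) w'^2 / (1 - |w|^2),
     which vanishes on the radial curve above.
   - Differentiation of the curves, componentwise, by real linearity. *)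

Lemma Cplx_ext (a b : Cplx) : Re a = Re b -> Im a = Im b -> a = b.
Proof. destruct a, b; simpl; intros -> ->; reflexivity. Qed.

Lemma cosh_pos (x : R) : 0 < cosh x.
Proof. unfold cosh. pose proof (exp_pos x); pose proof (exp_pos (- x)); lra. Qed.

Lemma cosh_sq_minus_sinh_sq (x : R) : cosh x * cosh x - sinh x * sinh x = 1.
Proof.
  unfold cosh, sinh.
  assert (exp x * exp (- x) = 1) by (rewrite <- exp_plus, Rplus_opp_r; apply exp_0).
  nra.
Qed.

(* 1 - tanh^2 = 1/cosh^2: the identity behind both |tanh| < 1 and tanh'. *)
Lemma one_minus_tanh_sq (x : R) : 1 - tanh x * tanh x = / (cosh x * cosh x).
Proof.
  pose proof (cosh_pos x); pose proof (cosh_sq_minus_sinh_sq x).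
  unfold tanh. field_simplify_eq; lra.
Qed.

Lemma tanh_sq_lt_1 (x : R) : tanh x * tanh x < 1.
Proof.
  pose proof (one_minus_tanh_sq x).
  assert (0 < / (cosh x * cosh x)) by (apply Rinv_0_lt_compat; pose proof (cosh_pos x); nra).
  lra.
Qed.

Lemma derivable_pt_lim_tanh (x : R) : derivable_pt_lim tanh x (1 - tanh x * tanh x).
Proof.
  pose proof (cosh_pos x); pose proof (cosh_sq_minus_sinh_sq x).
  replace (1 - tanh x * tanh x) with
    ((cosh x * cosh x - sinh x * sinh x) / (cosh x)²) by (unfold tanh, Rsqr; field; lra).
  apply derivable_pt_lim_div; [apply derivable_pt_lim_sinh | apply derivable_pt_lim_cosh | lra].
Qed.

(* The real profile of the curve: w_curve B t = B * profile |B| t. *)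
Definition profile (b t : R) : R := tanh (t * b) / b.

Definition profile_deriv (b t : R) : R := 1 - b * b * (profile b t * profile b t).

Lemma profile_deriv_tanh (b t : R) : b <> 0 ->
  profile_deriv b t = 1 - tanh (t * b) * tanh (t * b).
Proof. intro hb. unfold profile_deriv, profile. field. exact hb. Qed.

Lemma profile_deriv_pos (b t : R) : b <> 0 -> 0 < profile_deriv b t.
Proof. intro hb. rewrite profile_deriv_tanh by exact hb. pose proof (tanh_sq_lt_1 (t * b)). lra. Qed.

Lemma profile_riccati (b t : R) : b <> 0 ->
  derivable_pt_lim (profile b) t (profile_deriv b t).
Proof.
  intro hb.
  replace (profile_deriv b t) with ((1 - tanh (t * b) * tanh (t * b)) * b / b)
    by (rewrite profile_deriv_tanh by exact hb; field; exact hb).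
  apply derivable_pt_lim_div_scal.
  apply (derivable_pt_lim_comp (fun s => s * b) tanh t b); [| apply derivable_pt_lim_tanh].
  pose proof (derivable_pt_lim_scal_right id t 1 b (derivable_pt_lim_id t)) as dlin.
  rewrite Rmult_1_l in dlin; exact dlin.
Qed.

Lemma profile_deriv_riccati (b t : R) : b <> 0 ->
  derivable_pt_lim (profile_deriv b) t (-2 * (b * b) * profile b t * profile_deriv b t).
Proof.
  intro hb.
  apply (derivable_pt_lim_ext (fun s => 1 - b * b * (profile b s * profile b s)));
    [reflexivity |].
  replace (-2 * (b * b) * profile b t * profile_deriv b t) with
    (0 - b * b * (profile_deriv b t * profile b t + profile b t * profile_deriv b t)) by ring.
  apply derivable_pt_lim_minus; [apply derivable_pt_lim_const |].
  apply derivable_pt_lim_scal, derivable_pt_lim_mult; apply profile_riccati; exact hb.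
Qed.

Lemma derivable_pt_lim_lincomb (f g : R -> R) (a u v t f' g' : R) :
  derivable_pt_lim f t f' -> derivable_pt_lim g t g' ->
  derivable_pt_lim (fun s => a + u * f s + v * g s) t (u * f' + v * g').
Proof.
  intros df dg.
  replace (u * f' + v * g') with (0 + u * f' + v * g') by ring.
  apply (derivable_pt_lim_plus (fun s => a + u * f s)); [| apply derivable_pt_lim_scal, dg].
  apply (derivable_pt_lim_plus (fct_cte a)); [apply derivable_pt_lim_const |].
  apply derivable_pt_lim_scal, df.
Qed.

Lemma has_deriv_real_scale (K : Cplx) (f f' : R -> R) :
  (forall t, derivable_pt_lim f t (f' t)) ->
  has_deriv (fun t => Cmul K (RtoC (f t))) (fun t => Cmul K (RtoC (f' t))).
Proof.
  intros df t; simpl; split.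
  - apply (derivable_pt_lim_ext (fun s => 0 + Re K * f s + - Im K * fct_cte 0 s));
      [intro s; unfold fct_cte; ring |].
    replace (Re K * f' t - Im K * 0) with (Re K * f' t + - Im K * 0) by ring.
    apply derivable_pt_lim_lincomb; [apply df | apply derivable_pt_lim_const].
  - apply (derivable_pt_lim_ext (fun s => 0 + Im K * f s + Re K * fct_cte 0 s));
      [intro s; unfold fct_cte; ring |].
    replace (Re K * 0 + Im K * f' t) with (Im K * f' t + Re K * 0) by ring.
    apply derivable_pt_lim_lincomb; [apply df | apply derivable_pt_lim_const].
Qed.

Lemma has_deriv_affine (A M : Cplx) (w w1 : R -> Cplx) :
  has_deriv w w1 ->
  has_deriv (fun t => Csub A (Cmul (w t) M)) (fun t => Csub C0 (Cmul (w1 t) M)).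
Proof.
  intros dw t; destruct (dw t) as [dre dim]; simpl; split.
  - apply (derivable_pt_lim_ext
             (fun s => Re A + - Re M * Re (w s) + Im M * Im (w s))); [intro s; ring |].
    replace (0 + - (Re (w1 t) * Re M - Im (w1 t) * Im M)) with
      (- Re M * Re (w1 t) + Im M * Im (w1 t)) by ring.
    apply derivable_pt_lim_lincomb; assumption.
  - apply (derivable_pt_lim_ext
             (fun s => Im A + - Im M * Re (w s) + - Re M * Im (w s))); [intro s; ring |].
    replace (0 + - (Re (w1 t) * Im M + Im (w1 t) * Re M)) with
      (- Im M * Re (w1 t) + - Re M * Im (w1 t)) by ring.
    apply derivable_pt_lim_lincomb; assumption.
Qed.

(* Geodesic expression of the Poincare disk metric dw dw'/(1-|w|^2)^2. *)
Definition disk_geod (w w1 w2 : Cplx) : Cplx :=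
  Cadd w2 (Cmul (RtoC 2) (Cmul (Cdiv (Cconj w) (Pfun w)) (Cmul w1 w1))).

(* z = e - w conj(e) satisfies z + conj(z) w = e (1 - |w|^2), so eta = e. *)
Lemma eta_affine (e w : Cplx) : Cnorm2 w <> 1 ->
  eta (Csub e (Cmul w (Cconj e))) w = e.
Proof.
  intro hw. destruct e as [er ei], w as [wr wi].
  unfold Cnorm2 in hw; simpl in hw.
  assert (1 - (wr * wr + wi * wi) <> 0) by lra.
  unfold eta, Cdiv, Cinv, Pfun, Cnorm2, RtoC.
  apply Cplx_ext; simpl; field; assumption.
Qed.

(* With z' = -w' conj(eta), the eta-terms cancel in the second equation. *)
Lemma geod_eq2_reduction (k : R) (e z w z1 w1 w2 : Cplx) :
  eta z w = e -> z1 = Csub C0 (Cmul w1 (Cconj e)) ->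
  geod_eq2 k z w z1 w1 w2 = Cmul (RtoC (2 * k)) (disk_geod w w1 w2).
Proof.
  intros eta_z_w ->. unfold geod_eq2, disk_geod. rewrite eta_z_w.
  set (q := Cdiv (Cconj w) (Pfun w)).
  destruct q, e, w1, w2; apply Cplx_ext; simpl; ring.
Qed.

Lemma geod_eq1_reduction (k : R) (e z w z1 w1 z2 w2 : Cplx) :
  eta z w = e -> z1 = Csub C0 (Cmul w1 (Cconj e)) -> z2 = Csub C0 (Cmul w2 (Cconj e)) ->
  geod_eq1 k z w z1 w1 z2 = Cmul (Copp (Cconj e)) (geod_eq2 k z w z1 w1 w2).
Proof.
  intros eta_z_w z1_def ->.
  rewrite (geod_eq2_reduction k e z w z1 w1 w2 eta_z_w z1_def).
  unfold geod_eq1, disk_geod. rewrite eta_z_w, z1_def.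
  set (q := Cdiv (Cconj w) (Pfun w)).
  destruct q, e, w1, w2; apply Cplx_ext; simpl; ring.
Qed.

(* Radial curves w = B c with c' = p = 1 - |B|^2 c^2 are disk geodesics:
   conj(w) w'^2 / P = |B|^2 c p B. *)
Lemma radial_disk_geod (B : Cplx) (c : R) :
  let p := 1 - Cnorm2 B * (c * c) in
  p <> 0 ->
  disk_geod (Cmul B (RtoC c)) (Cmul B (RtoC p))
            (Cmul B (RtoC (-2 * Cnorm2 B * c * p))) = C0.
Proof.
  intros p hp. destruct B as [br bi]. unfold p, Cnorm2 in *; simpl in *.
  unfold disk_geod, Pfun, Cdiv, Cinv, C0, RtoC, Cnorm2.
  apply Cplx_ext; simpl; field; nra.
Qed.

Section RadialCurve.
Variable B : Cplx.
Hypothesis B_neq0 : B <> C0.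

Definition w_vel (t : R) : Cplx := Cmul B (RtoC (profile_deriv (Cabs B) t)).
Definition w_acc (t : R) : Cplx :=
  Cmul B (RtoC (-2 * (Cabs B * Cabs B) * profile (Cabs B) t * profile_deriv (Cabs B) t)).

Lemma Cabs_sq : Cabs B * Cabs B = Cnorm2 B.
Proof.
  apply sqrt_sqrt. destruct B as [br bi]; unfold Cnorm2; simpl; nra.
Qed.

Lemma Cabs_neq0 : Cabs B <> 0.
Proof.
  intro E. apply B_neq0. pose proof Cabs_sq as hsq. rewrite E in hsq.
  destruct B as [br bi]; unfold Cnorm2 in hsq; simpl in hsq.
  apply Cplx_ext; simpl; nra.
Qed.

Lemma w_curve_norm2 (t : R) : Cnorm2 (w_curve B t) = 1 - profile_deriv (Cabs B) t.
Proof.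
  unfold profile_deriv; rewrite Cabs_sq.
  unfold w_curve, profile; destruct B as [br bi]; unfold Cnorm2; simpl; ring.
Qed.

Lemma w_curve_in_disk (t : R) : Cabs (w_curve B t) < 1.
Proof.
  pose proof (profile_deriv_pos (Cabs B) t Cabs_neq0).
  unfold Cabs at 1; rewrite <- sqrt_1.
  apply sqrt_lt_1; [unfold Cnorm2; nra | lra | rewrite w_curve_norm2; lra].
Qed.

Lemma w_curve_deriv : has_deriv (w_curve B) w_vel.
Proof.
  apply (has_deriv_real_scale B (profile (Cabs B))).
  intro t; apply profile_riccati, Cabs_neq0.
Qed.

Lemma w_vel_deriv : has_deriv w_vel w_acc.
Proof. apply has_deriv_real_scale; intro t; apply profile_deriv_riccati, Cabs_neq0. Qed.

Lemma w_curve_disk_geod (t : R) : disk_geod (w_curve B t) (w_vel t) (w_acc t) = C0.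
Proof.
  pose proof (profile_deriv_pos (Cabs B) t Cabs_neq0) as hp.
  change (w_curve B t) with (Cmul B (RtoC (profile (Cabs B) t))).
  unfold w_vel, w_acc, profile_deriv in *; rewrite Cabs_sq in *.
  apply radial_disk_geod; lra.
Qed.

End RadialCurve.

Theorem mainTheorem5 (k : R) (hk : 0 < k) (eta0 B : Cplx) (hB : B <> C0) :
  (forall t : R, Cabs (w_curve B t) < 1) /\
  (exists z1 z2 w1 w2 : R -> Cplx,
     has_deriv (z_curve eta0 B) z1 /\ has_deriv z1 z2 /\
     has_deriv (w_curve B) w1 /\ has_deriv w1 w2 /\
     (forall t : R,
        geod_eq1 k (z_curve eta0 B t) (w_curve B t) (z1 t) (w1 t) (z2 t) = C0 /\
        geod_eq2 k (z_curve eta0 B t) (w_curve B t) (z1 t) (w1 t) (w2 t) = C0)) /\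
  (forall t : R, eta (z_curve eta0 B t) (w_curve B t) = eta0).
Proof.
  pose (z_of (v : R -> Cplx) (t : R) := Csub C0 (Cmul (v t) (Cconj eta0))).
  assert (eta_const : forall t, eta (z_curve eta0 B t) (w_curve B t) = eta0).
  { intro t; apply eta_affine; rewrite (w_curve_norm2 B hB).
    pose proof (profile_deriv_pos (Cabs B) t (Cabs_neq0 B hB)); lra. }
  assert (eq2 : forall t,
    geod_eq2 k (z_curve eta0 B t) (w_curve B t) (z_of (w_vel B) t) (w_vel B t) (w_acc B t) = C0).
  { intro t; rewrite (geod_eq2_reduction k eta0), (w_curve_disk_geod B hB)
      by (apply eta_const || reflexivity).
    apply Cplx_ext; simpl; ring. }
  split; [exact (w_curve_in_disk B hB) | split; [| exact eta_const]].
  exists (z_of (w_vel B)), (z_of (w_acc B)), (w_vel B), (w_acc B).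
  split; [apply has_deriv_affine, w_curve_deriv, hB |].
  split; [apply (has_deriv_affine C0), w_vel_deriv, hB |].
  split; [apply w_curve_deriv, hB |].
  split; [apply w_vel_deriv, hB |].
  intro t; split; [| apply eq2].
  rewrite (geod_eq1_reduction k eta0 _ _ _ _ _ (w_acc B t)), eq2
    by (apply eta_const || reflexivity).
  apply Cplx_ext; simpl; ring.
Qed.
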